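(* Let $G$ be the graph defined in the context. For every pair $\{x,y\}$ of distinct vertices of $G$ that are not adjacent in $G$, the graph obtained from $G$ by adding the edge $xy$ contains an induced subgraph isomorphic to $P_6$.
   Context: $P_n$ denotes the path on $n$ vertices. Let $\mathbb{F}=\mathbb{F}_2[\alpha]/(\alpha^4+\alpha+1)$ be the field with 16 elements. Let $S=\{x^3: x\in\mathbb{F}^\times\}=\{1,\alpha^3,\alpha^2+\alpha^3,\alpha+\alpha^3,1+\alpha+\alpha^2+\alpha^3\}$ be the set of nonzero cubes. Let $G$ be the graph with vertex set $\mathbb{F}$ in which distinct $x,y$ are adjacent if and only if $x-y\in S$. *)

From mathcomp Require Import all_boot.
Set Implicit Arguments. Unset Strict Implicit. Unset Printing Implicit Defensive.

(* The field F_16 = F_2[a]/(a^4+a+1): an element (((c0,c1),c2),c3)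
   represents c0 + c1 a + c2 a^2 + c3 a^3 (coefficients in F_2 = bool,
   addition = xor, multiplication = and). *)
Definition F16 : finType := (bool * bool * bool * bool)%type.

Definition zeroF : F16 := (false, false, false, false).
Definition oneF : F16 := (true, false, false, false).

Definition addF (x y : F16) : F16 :=
  let: (a0, a1, a2, a3) := x in
  let: (b0, b1, b2, b3) := y in
  (addb a0 b0, addb a1 b1, addb a2 b2, addb a3 b3).

(* In characteristic 2, x - y = x + (-y) with -y = y. *)
Definition oppF (x : F16) : F16 := x.
Definition subF (x y : F16) : F16 := addF x (oppF y).

(* Polynomial product followed by reduction using a^4 = a + 1,
   a^5 = a^2 + a, a^6 = a^3 + a^2. *)
Definition mulF (x y : F16) : F16 :=
  let: (a0, a1, a2, a3) := x in
  let: (b0, b1, b2, b3) := y in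
  let c0 := a0 && b0 in
  let c1 := addb (a0 && b1) (a1 && b0) in
  let c2 := addb (addb (a0 && b2) (a1 && b1)) (a2 && b0) in
  let c3 := addb (addb (a0 && b3) (a1 && b2)) (addb (a2 && b1) (a3 && b0)) in
  let c4 := addb (addb (a1 && b3) (a2 && b2)) (a3 && b1) in
  let c5 := addb (a2 && b3) (a3 && b2) in
  let c6 := a3 && b3 in
  (addb c0 c4, addb (addb c1 c4) c5, addb (addb c2 c5) c6, addb c3 c6).

Definition cubeF (x : F16) : F16 := mulF x (mulF x x).

Definition S : {set F16} := [set cubeF x | x in [set x : F16 | x != zeroF]].

Definition adjG : rel F16 := fun x y => (x != y) && (subF x y \in S).

Definition add_edge (T : eqType) (e : rel T) (x y : T) : rel T :=
  fun u v => [|| e u v, (u == x) && (v == y) | (u == y) && (v == x)].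

Definition path_adj (n : nat) : rel 'I_n :=
  fun i j => (i.+1 == j :> nat) || (j.+1 == i :> nat).

Definition has_induced_path (T : finType) (e : rel T) (n : nat) : Prop :=
  exists f : 'I_n -> T, injective f /\ forall i j, e (f i) (f j) = path_adj i j.

(* The maps  z |-> b + c * s(z),  with b in F_16, c a nonzero
   cube and s either the identity or the Frobenius map z |-> z^2, are
   automorphisms of G: they are injective and send a difference u - v to
   c * s(u - v), which is a cube exactly when u - v is.  These maps act
   transitively on the non-edges of G: every nonzero non-cube is of the form
   c * a or c * a^2 with c a cube, where a is the generator alpha of F_16.
   So it suffices to exhibit one induced P_6 in G + {0, a}, which is a finite
   computation, and to transport it along an automorphism. *)

From mathcomp Require Import all_boot.
Set Implicit Arguments. Unset Strict Implicit. Unset Printing Implicit Defensive.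

Lemma induced_path_transport (T U : finType) (e : rel T) (e' : rel U)
    (phi : T -> U) (n : nat) :
  injective phi -> (forall u v, e' (phi u) (phi v) = e u v) ->
  has_induced_path e n -> has_induced_path e' n.
Proof.
move=> phi_inj phi_hom [f [f_inj f_path]].
by exists (phi \o f); split; [exact: inj_comp | move=> i j; rewrite /= phi_hom].
Qed.

Lemma add_edge_transport (T U : eqType) (e : rel T) (e' : rel U)
    (phi : T -> U) (x y : T) :
  injective phi -> (forall u v, e' (phi u) (phi v) = e u v) ->
  forall u v, add_edge e' (phi x) (phi y) (phi u) (phi v) = add_edge e x y u v.
Proof. by move=> phi_inj phi_hom u v; rewrite /add_edge phi_hom !(inj_eq phi_inj). Qed.

Definition is_induced_path (T : eqType) (x0 : T) (e : rel T) (s : seq T) : bool :=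
  uniq s && all (fun i => all (fun j =>
    e (nth x0 s i) (nth x0 s j) == (i.+1 == j) || (j.+1 == i))
    (iota 0 (size s))) (iota 0 (size s)).

Lemma is_induced_pathP (T : finType) (x0 : T) (e : rel T) (s : seq T) :
  is_induced_path x0 e s -> has_induced_path e (size s).
Proof.
case/andP=> s_uniq /allP s_adj.
exists (fun i : 'I_(size s) => nth x0 s i); split.
  by move=> i j /eqP; rewrite nth_uniq // => /eqP /val_inj.
have in_range (k : 'I_(size s)) : (k : nat) \in iota 0 (size s).
  by rewrite mem_iota add0n ltn_ord.
by move=> i j; apply/eqP; exact: (allP (s_adj i (in_range i)) j (in_range j)).
Qed.

(* The 16 elements of F_16, listed by binary expansion of 0..15; universal
   statements over F_16 are then decided by evaluation. *)
Definition elt_of_nat (n : nat) : F16 :=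
  (odd n, odd n./2, odd n./2./2, odd n./2./2./2).

Definition elementsF : seq F16 := [seq elt_of_nat n | n <- iota 0 16].

Lemma mem_elementsF (z : F16) : z \in elementsF.
Proof. by case: z => [[[[] []] []] []]. Qed.

Lemma forallF (P : pred F16) : all P elementsF -> forall z, P z.
Proof. by move=> /allP P_all z; apply: P_all; exact: mem_elementsF. Qed.

Lemma forallF2 (P : F16 -> pred F16) :
  all (fun u => all (P u) elementsF) elementsF -> forall u v, P u v.
Proof. by move=> P_all u; apply: forallF; apply: (forallF P_all). Qed.

Lemma forallF3 (P : F16 -> F16 -> pred F16) :
  all (fun u => all (fun v => all (P u v) elementsF) elementsF) elementsF ->
  forall u v w, P u v w.
Proof. by move=> P_all u; apply: forallF2; apply: (forallF P_all). Qed.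

Definition cubes : seq F16 := [seq cubeF x | x <- elementsF & x != zeroF].

Lemma mem_S (z : F16) : (z \in S) = (z \in cubes).
Proof.
apply/imsetP/mapP => [[x]|[x]].
  by rewrite inE => x_nz ->; exists x; rewrite // mem_filter x_nz mem_elementsF.
by rewrite mem_filter => /andP[x_nz _] ->; exists x; rewrite // inE.
Qed.

Definition alpha : F16 := (false, true, false, false).

Definition sqF (z : F16) : F16 := mulF z z.

Lemma addFK (b z : F16) : addF b (addF b z) = z.
Proof. by apply/eqP; move: b z; apply: forallF2; vm_compute. Qed.

Lemma addF0 (b : F16) : addF b zeroF = b.
Proof. by apply/eqP; move: b; apply: forallF; vm_compute. Qed.

Lemma subF_addl (b u v : F16) : subF (addF b u) (addF b v) = subF u v.
Proof. by apply/eqP; move: b u v; apply: forallF3; vm_compute. Qed.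

Lemma subF_mull (c u v : F16) : subF (mulF c u) (mulF c v) = mulF c (subF u v).
Proof. by apply/eqP; move: c u v; apply: forallF3; vm_compute. Qed.

Lemma subF_sq (u v : F16) : subF (sqF u) (sqF v) = sqF (subF u v).
Proof. by apply/eqP; move: u v; apply: forallF2; vm_compute. Qed.

Lemma mulF0 (c : F16) : mulF c zeroF = zeroF.
Proof. by apply/eqP; move: c; apply: forallF; vm_compute. Qed.

Lemma mulF_inj (c : F16) : c != zeroF -> injective (mulF c).
Proof.
move=> c_nz u v cu_cv; apply/eqP.
have : (c != zeroF) ==> (mulF c u == mulF c v) ==> (u == v).
  by move: c u v {c_nz cu_cv}; apply: forallF3; vm_compute.
by rewrite c_nz cu_cv eqxx.
Qed.

Lemma sqF_inj : injective sqF.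
Proof.
move=> u v uu_vv; apply/eqP.
have : (sqF u == sqF v) ==> (u == v) by move: u v {uu_vv}; apply: forallF2; vm_compute.
by rewrite uu_vv eqxx.
Qed.

Lemma mulF_cube (c z : F16) : c \in S -> (mulF c z \in S) = (z \in S).
Proof.
rewrite !mem_S => c_cube; apply/eqP.
have : (c \in cubes) ==> ((mulF c z \in cubes) == (z \in cubes)).
  by move: c z {c_cube}; apply: forallF2; vm_compute.
by rewrite c_cube.
Qed.

Lemma sqF_cube (z : F16) : (sqF z \in S) = (z \in S).
Proof. by rewrite !mem_S; apply/eqP; move: z; apply: forallF; vm_compute. Qed.

Lemma cube_neq0 (c : F16) : c \in S -> c != zeroF.
Proof. by rewrite mem_S; apply: contraTneq => ->. Qed.

Lemma noncube_decomp (d : F16) : d != zeroF -> d \notin S ->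
  exists2 c, c \in S & (d = mulF c alpha \/ d = mulF c (sqF alpha)).
Proof.
rewrite mem_S => d_nz d_ncube.
have : (d != zeroF) ==> (d \notin cubes) ==>
    has (fun c => (d == mulF c alpha) || (d == mulF c (sqF alpha))) cubes.
  by move: d {d_nz d_ncube}; apply: forallF; vm_compute.
move=> /implyP/(_ d_nz)/implyP/(_ d_ncube).
by case/hasP=> c c_cube /orP[] /eqP d_eq; exists c; rewrite ?mem_S; auto.
Qed.

Definition semilinear (frob : bool) (c b z : F16) : F16 :=
  addF b (mulF c (if frob then sqF z else z)).

Lemma semilinear_inj (frob : bool) (c b : F16) :
  c \in S -> injective (semilinear frob c b).
Proof.
move=> c_cube u v /(congr1 (addF b)); rewrite !addFK => /(mulF_inj (cube_neq0 c_cube)).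
by case: frob => //; exact: sqF_inj.
Qed.

Lemma semilinear_adj (frob : bool) (c b : F16) : c \in S ->
  forall u v, adjG (semilinear frob c b u) (semilinear frob c b v) = adjG u v.
Proof.
move=> c_cube u v; rewrite /adjG (inj_eq (@semilinear_inj frob c b c_cube)).
rewrite /semilinear subF_addl subF_mull mulF_cube //.
by case: frob; rewrite ?subF_sq ?sqF_cube.
Qed.

Lemma nonedge_image (x y : F16) : x != y -> ~~ adjG x y ->
  exists frob, exists2 c, c \in S &
    semilinear frob c x zeroF = x /\ semilinear frob c x alpha = y.
Proof.
move=> x_neq_y; rewrite /adjG x_neq_y /= => d_ncube.
have y_eq : addF x (subF x y) = y by rewrite addFK.
have d_nz : subF x y != zeroF.
  by apply: contra x_neq_y => /eqP d0; rewrite -y_eq d0 addF0.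
case: (noncube_decomp d_nz d_ncube) => c c_cube [] d_eq.
- by exists false, c => //; rewrite /semilinear /= mulF0 addF0 -d_eq.
- by exists true, c => //; rewrite /semilinear /= /sqF !mulF0 addF0 -d_eq.
Qed.

(* The induced path 0, a, 1 + a, 1 + a^3, 1 + a^2, a^2 in G + {0, a}. *)
Lemma base_path : has_induced_path (add_edge adjG zeroF alpha) 6.
Proof.
pose adj_cubes u v := (u != v) && (subF u v \in cubes).
apply: (@induced_path_transport _ _ (add_edge adj_cubes zeroF alpha) _ id) => //.
  by move=> u v; rewrite /add_edge /adjG mem_S.
apply: (@is_induced_pathP _ zeroF _ [:: zeroF; alpha;
  (true, true, false, false); (true, false, false, true);
  (true, false, true, false); (false, false, true, false)]).
by vm_compute.
Qed.

Theorem claim2 : forall x y : F16, x != y -> ~~ adjG x y ->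
  has_induced_path (add_edge adjG x y) 6.
Proof.
move=> x y x_neq_y nonadj.
have [frob [c c_cube [phi0 phi_alpha]]] := nonedge_image x_neq_y nonadj.
have phi_inj := @semilinear_inj frob c x c_cube.
have phi_adj := @semilinear_adj frob c x c_cube.
have := add_edge_transport zeroF alpha phi_inj phi_adj.
rewrite phi0 phi_alpha => phi_add_edge.
exact: induced_path_transport phi_inj phi_add_edge base_path.
Qed.
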